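(* Let $H=H(V,w)$ be a weighted graph and let $\mathcal D=\{H^j(V_j,w_j):1\le j\le m\}$ be a decomposition of $H$. For each vertex $u\in V$ let $\lambda(\mathcal D_u)=\sum_{j:\,u\in V_j}\lambda(H^j)$ (an empty sum being $0$). Then $$\lambda(H)\ \ge\ \min_{u\in V}\lambda(\mathcal D_u).$$ Writing $\lambda(\mathcal D)=\min_u\lambda(\mathcal D_u)$, equality holds if and only if there is a nonzero real vector $x=(x_u)_{u\in V}$ such that (1) $x_u=0$ for every $u$ with $\lambda(\mathcal D_u)>\lambda(\mathcal D)$, and (2) for every $1\le j\le m$, the restriction $x_j$ of $x$ to $V_j$ is either the zero vector or an eigenvector of the adjacency matrix $A(w_j)$ of $H^j$ for the eigenvalue $\lambda(H^j)$.
   Context: A weighted graph $H(V,w)$ consists of a finite vertex set $V$ and a function $w$ assigning a real number (possibly negative or zero) $w(uv)$ to every unordered pair $\{u,v\}$ of vertices, including pairs with $u=v$ (loops). Its adjacency matrix $A(w)$ is the real symmetric matrix indexed by $V$ with $(u,v)$-entry $w(uv)$ (so diagonal entries are $w(uu)$), and $\lambda(H)$ denotes the smallest eigenvalue of $A(w)$. A family $\{H^j(V_j,w_j):1\le j\le m\}$ of weighted graphs is a decomposition of $H(V,w)$ if $V_j\subseteq V$ for all $j$ and $w(uv)=\sum_{j=1}^m w_j(uv)$ for all unordered pairs $u,v\in V$, where $w_j(uv)$ is taken to be $0$ if $u\notin V_j$ or $v\notin V_j$. *)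

From HB Require Import structures.
From mathcomp Require Import all_boot all_order all_algebra.
Set Implicit Arguments. Unset Strict Implicit. Unset Printing Implicit Defensive.
Import Order.TTheory GRing.Theory Num.Theory.
Local Open Scope ring_scope.

(* Vertex set V = 'I_N (any nonempty finite set, up to relabelling).
   A weight function is a map V -> V -> R (symmetry assumed separately). *)

Definition adjmx (R : rcfType) (N : nat) (w : 'I_N -> 'I_N -> R) : 'M[R]_N :=
  \matrix_(u, v) w u v.

Definition subadjmx (R : rcfType) (N : nat) (Vj : {set 'I_N})
    (wj : 'I_N -> 'I_N -> R) : 'M[R]_#|Vj| :=
  \matrix_(a, b) wj (enum_val a) (enum_val b).

Definition restr (R : rcfType) (N : nat) (Vj : {set 'I_N}) (x : 'rV[R]_N)
    : 'rV[R]_#|Vj| :=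
  \row_a x 0 (enum_val a).

Definition is_min_eig (R : rcfType) (k : nat) (A : 'M[R]_k) (l : R) : Prop :=
  eigenvalue A l /\ (forall a, eigenvalue A a -> l <= a).

(* v is an eigenvector of A for eigenvalue l (row convention, as in
   mathcomp's [eigenvalue]; A is symmetric in our use) *)
Definition is_eigvec (R : rcfType) (k : nat) (A : 'M[R]_k) (l : R)
    (v : 'rV[R]_k) : Prop :=
  v != 0 /\ v *m A = l *: v.

Definition lamDu (R : rcfType) (N m : nat) (Vs : 'I_m -> {set 'I_N})
    (lam : 'I_m -> R) (u : 'I_N) : R :=
  \sum_(j < m | u \in Vs j) lam j.

Definition lamD (R : rcfType) (n m : nat) (Vs : 'I_m -> {set 'I_n.+1})
    (lam : 'I_m -> R) : R :=
  \big[Num.min/lamDu Vs lam ord0]_(u < n.+1) lamDu Vs lam u.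

(* Write x_j for the restriction of x to V_j and A_j for A(w_j).  For every x,
   x A x^T = sum_j x_j A_j x_j^T >= sum_j lambda(H^j) |x_j|^2
           = sum_u lambda(D_u) x_u^2 >= lambda(D) |x|^2,
   so lambda(D) is below every eigenvalue of A(w).  The converse bound of
   Rayleigh, lambda(H) |x|^2 <= x A x^T, shows that lambda(H) = lambda(D) iff
   some x != 0 makes both inequalities tight.  Tightness of the last one means
   that x vanishes where lambda(D_u) > lambda(D); tightness of the first one
   means that each x_j attains the Rayleigh bound of A_j, i.e. is zero or an
   eigenvector for lambda(H^j).  The Rayleigh bound itself comes from the
   spectral theorem for hermitian matrices over R[i]. *)

From HB Require Import structures.
From mathcomp Require Import all_boot all_order all_algebra.
From mathcomp Require Import ring lra.
From mathcomp.real_closed Require Import complex.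
Set Implicit Arguments.
Unset Strict Implicit.
Unset Printing Implicit Defensive.
Import Order.TTheory GRing.Theory Num.Theory.
Local Open Scope ring_scope.

Definition qform (R : comNzRingType) k (B : 'M[R]_k) (x : 'rV[R]_k) : R :=
  (x *m B *m x^T) 0 0.

Definition sqnorm (R : comNzRingType) k (x : 'rV[R]_k) : R := (x *m x^T) 0 0.

Section QuadraticForms.
Variables (R : comNzRingType) (k : nat).
Implicit Types (B : 'M[R]_k) (x y : 'rV[R]_k).

Lemma qformE B x : qform B x = \sum_i \sum_j x 0 i * B i j * x 0 j.
Proof.
rewrite /qform mxE; under eq_bigr => j _ do rewrite !mxE mulr_suml.
by rewrite exchange_big.
Qed.

Lemma sqnormE x : sqnorm x = \sum_i x 0 i ^+ 2.
Proof. by rewrite /sqnorm mxE; apply: eq_bigr => i _; rewrite mxE expr2. Qed.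

Lemma qform_eigvec B (l : R) x : x *m B = l *: x -> qform B x = l * sqnorm x.
Proof. by move=> xB; rewrite /qform xB -scalemxAl mxE. Qed.

Lemma qform_shift B (l : R) x : qform (B - l%:M) x = qform B x - l * sqnorm x.
Proof. by rewrite /qform /sqnorm mulmxBr mul_mx_scalar mulmxBl -scalemxAl !mxE. Qed.

Lemma symmx_bilinearC B x y : B^T = B ->
  x *m B *m y^T = y *m B *m x^T.
Proof.
move=> Bsym; apply/matrixP => i j; rewrite !ord1.
have -> : (x *m B *m y^T) 0 0 = ((x *m B *m y^T)^T) 0 0 by rewrite [RHS]mxE.
by rewrite !trmx_mul !trmxK Bsym mulmxA.
Qed.

End QuadraticForms.

Section RealQuadraticForms.
Variables (R : realDomainType) (k : nat).
Implicit Types (B : 'M[R]_k) (x : 'rV[R]_k).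

Lemma sqnorm_ge0 x : 0 <= sqnorm x.
Proof. by rewrite sqnormE sumr_ge0 // => i _; rewrite sqr_ge0. Qed.

Lemma sqnorm_eq0 x : (sqnorm x == 0) = (x == 0).
Proof.
apply/idP/eqP => [|->]; last by rewrite /sqnorm mul0mx mxE.
rewrite sqnormE psumr_eq0 => [/allP x0|i _]; last exact: sqr_ge0.
apply/rowP => i; move/(_ i (mem_index_enum i)): x0.
by rewrite sqrf_eq0 mxE => /eqP.
Qed.

Lemma sqnorm_gt0 x : (0 < sqnorm x) = (x != 0).
Proof. by rewrite lt_def sqnorm_eq0 sqnorm_ge0 andbT. Qed.

End RealQuadraticForms.

Lemma psd_form_eq0 (R : realFieldType) k (C : 'M[R]_k) (y : 'rV[R]_k) :
  C^T = C -> (forall z, 0 <= qform C z) -> qform C y = 0 -> y *m C = 0.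
Proof.
(* The form at y - t (y C) is -2 t |y C|^2 + t^2 (y C) C (y C)^T, which is
   negative for small t > 0 unless y C = 0. *)
move=> Csym C_psd Cy0; set z := y *m C.
have shiftE t : qform C (y - t *: z) = - 2 * t * sqnorm z + t ^+ 2 * qform C z.
  rewrite /qform /sqnorm.
  have -> : (y - t *: z)^T = y^T - t *: z^T by apply/matrixP => i j; rewrite !mxE.
  rewrite !mulmxBl !mulmxBr -!scalemxAl -!scalemxAr.
  rewrite (symmx_bilinearC z y Csym) -/z.
  move: Cy0; rewrite /qform !mxE => ->; ring.
apply/eqP; rewrite -sqnorm_eq0; apply/eqP.
have s_ge0 := sqnorm_ge0 z; have c_ge0 := C_psd z.
move: (sqnorm z) (qform C z) s_ge0 c_ge0 shiftE => s c s_ge0 c_ge0 shiftE.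
pose t := s / (c + 1).
have sE : s = t * (c + 1) by rewrite /t divfK // lt0r_neq0 // ltr_wpDl.
have := C_psd (y - t *: z); rewrite shiftE; clearbody t; nra.
Qed.

Section NormalForm.
Variables (C : numClosedFieldType) (k : nat) (A : 'M[C]_k).
Hypothesis A_normal : A \is normalmx.
Local Open Scope sesquilinear_scope.

Let P := spectralmx A.
Let d := spectral_diag A.
Let P_unitary : P \is unitarymx := spectral_unitarymx A.

Let AE : A = P^t* *m diag_mx d *m P.
Proof. by rewrite -invmx_unitary //; apply/orthomx_spectralP. Qed.

Lemma spectral_diag_eigenvalue i : eigenvalue A (d 0 i).
Proof.
apply/eigenvalueP; exists ('e_i *m P).
  by rewrite AE !mulmxA mulmxtVK // -(rowE i (diag_mx d)) row_diag_mx -scalemxAl.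
apply: contraNneq (oner_neq0 C) => /(congr1 (mulmx^~ (P^t* ))).
rewrite mulmxtVK // mul0mx => /matrixP/(_ 0 i).
by rewrite !mxE !eqxx => /eqP.
Qed.

Lemma normalmx_form_ge (c : C) : (forall i, c <= d 0 i) ->
  forall z : 'rV_k, c * (z *m z^t* ) 0 0 <= (z *m A *m z^t* ) 0 0.
Proof.
move=> c_le z; set y := z *m P^t*.
have zE : z = y *m P by rewrite mulmxKtV.
have ztE : z^t* = P^t* *m y^t* by rewrite zE trmx_mul map_mxM.
rewrite ztE zE AE !mulmxA !mulmxtVK //.
rewrite mul_mx_diag !mxE mulr_sumr; apply: ler_sum => i _.
by rewrite !mxE mulrC [X in _ <= X]mulrAC ler_wpM2l ?mul_conjC_ge0.
Qed.
End NormalForm.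

Lemma symmx_form_ge (R : rcfType) k (B : 'M[R]_k) (mu : R) :
  B^T = B -> (forall a, eigenvalue B a -> mu <= a) ->
  forall x : 'rV_k, mu * sqnorm x <= qform B x.
Proof.
move=> Bsym mu_le x.
pose f : {rmorphism R -> R[i]} := real_complex R.
have f_real r : f r \is Num.real by apply/complex_realP; exists r.
have fC r : (f r)^* = f r by apply/conj_Creal.
have Bf_herm : map_mx f B \is hermsymmx.
  apply: realsym_hermsym; last by apply/mxOverP => a b; rewrite mxE.
  apply/is_hermitianmxP; rewrite expr0 scale1r.
  by apply/matrixP => i j; rewrite !mxE -[in RHS]Bsym mxE.
have d_ge i : f mu <= spectral_diag (map_mx f B) 0 i.
  have /mxOverP/(_ 0 i)/complex_realP[r dE] := hermitian_spectral_diag_real Bf_herm.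
  rewrite dE lecR; apply: mu_le; rewrite -(eigenvalue_map f) -[f r]/(r%:C)%C -dE.
  exact/spectral_diag_eigenvalue/hermitian_normalmx.
have xT : ((map_mx f x)^t* )%sesqui = map_mx f x^T by apply/matrixP => i j; rewrite !mxE fC.
have := normalmx_form_ge (hermitian_normalmx Bf_herm) d_ge (map_mx f x).
by rewrite xT -!map_mxM ![(map_mx f _) 0 0]mxE -rmorphM lecR.
Qed.

Lemma form_lbound_le_eigenvalue (R : realFieldType) k (B : 'M[R]_k) (c l : R) :
  eigenvalue B l -> (forall x, c * sqnorm x <= qform B x) -> c <= l.
Proof.
move=> /eigenvalueP[v vB v0] c_le.
by have := c_le v; rewrite (qform_eigvec vB) ler_pM2r // sqnorm_gt0.
Qed.

Lemma symmx_form_eq (R : rcfType) k (B : 'M[R]_k) (mu : R) (y : 'rV_k) :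
  B^T = B -> (forall a, eigenvalue B a -> mu <= a) ->
  qform B y = mu * sqnorm y -> y *m B = mu *: y.
Proof.
move=> Bsym mu_le yE.
have: y *m (B - mu%:M) = 0.
  apply: psd_form_eq0.
  - by rewrite linearB /= Bsym tr_scalar_mx.
  - by move=> z; rewrite qform_shift subr_ge0 symmx_form_ge.
  - by rewrite qform_shift yE subrr.
by rewrite mulmxBr mul_mx_scalar => /eqP; rewrite subr_eq0 => /eqP.
Qed.

Section Restriction.
Variables (R : rcfType) (N : nat).
Implicit Types (V : {set 'I_N}) (W : 'I_N -> 'I_N -> R) (x : 'rV[R]_N).

Lemma trmx_adjmx W : (forall u v, W u v = W v u) -> (adjmx W)^T = adjmx W.
Proof. by move=> W_sym; apply/matrixP => u v; rewrite !mxE W_sym. Qed.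

Lemma trmx_subadjmx V W :
  (forall u v, W u v = W v u) -> (subadjmx V W)^T = subadjmx V W.
Proof. by move=> W_sym; apply/matrixP => a b; rewrite !mxE W_sym. Qed.

Lemma sqnorm_restr V x : sqnorm (restr V x) = \sum_(u in V) x 0 u ^+ 2.
Proof. by rewrite sqnormE [RHS]big_enum_val; apply: eq_bigr => a _; rewrite mxE. Qed.

Lemma qform_restr V W x : qform (subadjmx V W) (restr V x) =
  \sum_(u in V) \sum_(v in V) x 0 u * W u v * x 0 v.
Proof.
rewrite qformE [RHS]big_enum_val; apply: eq_bigr => a _.
by rewrite [RHS]big_enum_val; apply: eq_bigr => b _; rewrite !mxE.
Qed.

Variables (m : nat) (w : 'I_N -> 'I_N -> R) (Vs : 'I_m -> {set 'I_N}).
Variables (ws : 'I_m -> 'I_N -> 'I_N -> R) (lam : 'I_m -> R).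

Lemma qform_adjmx_decomp x :
  (forall u v, w u v = \sum_(j < m | (u \in Vs j) && (v \in Vs j)) ws j u v) ->
  qform (adjmx w) x = \sum_j qform (subadjmx (Vs j) (ws j)) (restr (Vs j) x).
Proof.
move=> w_decomp.
have sum_in2 (A : {set 'I_N}) (F : 'I_N -> 'I_N -> R) :
    \sum_(u in A) \sum_(v in A) F u v =
    \sum_u \sum_v (if (u \in A) && (v \in A) then F u v else 0).
  rewrite big_mkcond; apply: eq_bigr => u _.
  by case: (u \in A); rewrite /= ?big1_eq // big_mkcond.
under [RHS]eq_bigr => j _ do rewrite qform_restr sum_in2.
rewrite qformE [RHS]exchange_big; apply: eq_bigr => u _.
rewrite [RHS]exchange_big; apply: eq_bigr => v _.
by rewrite mxE w_decomp mulr_sumr mulr_suml big_mkcond.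
Qed.

Lemma sum_lam_sqnorm_restr x :
  \sum_j lam j * sqnorm (restr (Vs j) x) = \sum_u lamDu Vs lam u * x 0 u ^+ 2.
Proof.
under eq_bigr => j _ do rewrite sqnorm_restr mulr_sumr big_mkcond /=.
rewrite exchange_big; apply: eq_bigr => u _.
by rewrite /lamDu big_distrl /= [RHS]big_mkcond.
Qed.

End Restriction.

Lemma lamD_le_lamDu (R : rcfType) n m (Vs : 'I_m -> {set 'I_n.+1})
    (lam : 'I_m -> R) u :
  lamD Vs lam <= lamDu Vs lam u.
Proof. exact: bigmin_le. Qed.

Section DecompositionBound.
Variables (R : rcfType) (n m : nat) (w : 'I_n.+1 -> 'I_n.+1 -> R).
Variables (Vs : 'I_m -> {set 'I_n.+1}) (ws : 'I_m -> 'I_n.+1 -> 'I_n.+1 -> R).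
Variable lam : 'I_m -> R.
Hypothesis ws_sym : forall j u v, ws j u v = ws j v u.
Hypothesis w_decomp :
  forall u v, w u v = \sum_(j < m | (u \in Vs j) && (v \in Vs j)) ws j u v.
Hypothesis lam_min :
  forall j, Vs j != set0 -> is_min_eig (subadjmx (Vs j) (ws j)) (lam j).

Local Notation A j := (subadjmx (Vs j) (ws j)).
Local Notation L := (lamD Vs lam).

(* For empty V_j nothing is assumed about lam j, but then A j is 0 x 0 and has
   no eigenvalue. *)
Lemma lam_le_eigenvalue j a : eigenvalue (A j) a -> lam j <= a.
Proof.
have [Vj0 | /lam_min[_ lam_le]] := eqVneq (Vs j) set0; last exact: lam_le.
have card0 : #|Vs j| = 0%N by rewrite Vj0 cards0.
move=> /eigenvalueP[v _ /negP[]]; apply/eqP/rowP => i.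
by have := ltn_ord i; rewrite [X in (_ < X)%N]card0.
Qed.

Lemma local_form_ge j x :
  lam j * sqnorm (restr (Vs j) x) <= qform (A j) (restr (Vs j) x).
Proof.
exact: symmx_form_ge (trmx_subadjmx _ (ws_sym j)) (@lam_le_eigenvalue j) _.
Qed.

Lemma adjmx_form_gap x :
  qform (adjmx w) x - L * sqnorm x =
  \sum_j (qform (A j) (restr (Vs j) x) - lam j * sqnorm (restr (Vs j) x)) +
  \sum_u (lamDu Vs lam u - L) * x 0 u ^+ 2.
Proof.
rewrite sumrB sum_lam_sqnorm_restr -(qform_adjmx_decomp _ w_decomp) sqnormE mulr_sumr.
under [X in _ = _ + X]eq_bigr => u _ do rewrite mulrBl.
by rewrite sumrB addrA subrK.
Qed.

Lemma adjmx_form_ge x : L * sqnorm x <= qform (adjmx w) x.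
Proof.
rewrite -subr_ge0 adjmx_form_gap addr_ge0 // sumr_ge0 // => [j _|u _].
  by rewrite subr_ge0 local_form_ge.
by rewrite mulr_ge0 ?sqr_ge0 // subr_ge0 lamD_le_lamDu.
Qed.

Lemma adjmx_form_eqP x :
  qform (adjmx w) x = L * sqnorm x <->
  (forall u, L < lamDu Vs lam u -> x 0 u = 0) /\
  (forall j, restr (Vs j) x = 0 \/ is_eigvec (A j) (lam j) (restr (Vs j) x)).
Proof.
have local_ge0 j :
    0 <= qform (A j) (restr (Vs j) x) - lam j * sqnorm (restr (Vs j) x).
  by rewrite subr_ge0 local_form_ge.
have vertex_ge0 u : 0 <= (lamDu Vs lam u - L) * x 0 u ^+ 2.
  by rewrite mulr_ge0 ?sqr_ge0 // subr_ge0 lamD_le_lamDu.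
split.
  move=> /eqP; rewrite -subr_eq0 adjmx_form_gap paddr_eq0 ?sumr_ge0 //.
  move=> /andP[/eqP local0 /eqP vertex0]; split=> [u lt_u | j].
    have /eqP := psumr_eq0P (fun u _ => vertex_ge0 u) vertex0 (i := u) isT.
    by rewrite mulf_eq0 sqrf_eq0 subr_eq0 (gt_eqF lt_u) => /eqP.
  have /eqP := psumr_eq0P (fun j _ => local_ge0 j) local0 (i := j) isT.
  rewrite subr_eq0 => /eqP xjE.
  have [-> | xj0] := eqVneq (restr (Vs j) x) 0; [by left | right; split=> //].
  exact: symmx_form_eq (trmx_subadjmx _ (ws_sym j)) (@lam_le_eigenvalue j) xjE.
move=> [vertex0 local0]; apply/eqP; rewrite -subr_eq0 adjmx_form_gap.
rewrite !big1 ?addr0 // => [u _ | j _].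
  have := lamD_le_lamDu Vs lam u; rewrite le_eqVlt => /orP[/eqP <- | /vertex0 ->].
    by rewrite subrr mul0r.
  by rewrite expr0n mulr0.
have [->|[_ xjE]] := local0 j; last by rewrite (qform_eigvec xjE) subrr.
by rewrite (@qform_eigvec _ _ _ (lam j)) ?subrr // mul0mx scaler0.
Qed.

End DecompositionBound.

Theorem mainTheorem1 (R : rcfType) (n m : nat)
    (w : 'I_n.+1 -> 'I_n.+1 -> R)
    (Vs : 'I_m -> {set 'I_n.+1})
    (ws : 'I_m -> 'I_n.+1 -> 'I_n.+1 -> R)
    (lamH : R) (lam : 'I_m -> R) :
  (forall u v, w u v = w v u) ->
  (forall j u v, ws j u v = ws j v u) ->
  (forall u v, w u v = \sum_(j < m | (u \in Vs j) && (v \in Vs j)) ws j u v) ->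
  is_min_eig (adjmx w) lamH ->
  (forall j, Vs j != set0 -> is_min_eig (subadjmx (Vs j) (ws j)) (lam j)) ->
  lamD Vs lam <= lamH /\
  (lamH = lamD Vs lam <->
   exists x : 'rV[R]_n.+1, x != 0 /\
     (forall u, lamD Vs lam < lamDu Vs lam u -> x 0 u = 0) /\
     (forall j, restr (Vs j) x = 0 \/
                is_eigvec (subadjmx (Vs j) (ws j)) (lam j) (restr (Vs j) x))).
Proof.
move=> w_sym ws_sym w_decomp [lamH_eig lamH_min] lam_min.
have form_eqP := adjmx_form_eqP ws_sym w_decomp lam_min.
have lamD_le : lamD Vs lam <= lamH.
  exact: form_lbound_le_eigenvalue lamH_eig (adjmx_form_ge ws_sym w_decomp lam_min).
split=> //; split=> [lamHE | [x [x0 /form_eqP xE]]].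
  have [v vA v0] := eigenvalueP lamH_eig.
  by exists v; split=> //; apply/form_eqP; rewrite (qform_eigvec vA) lamHE.
apply/le_anti; rewrite lamD_le andbT.
have := symmx_form_ge (trmx_adjmx w_sym) lamH_min x.
by rewrite xE ler_pM2r // sqnorm_gt0.
Qed.
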